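(* Let $k$ be a positive integer and let $H_k$ be the graph with half-edges obtained from the complete bipartite graph $K_{k,k}$ by deleting one vertex but keeping its $k$ incident edges as half-edges (each attached only at its other end vertex). Then $H_k$ is type 1, i.e. it admits a $(k+1)$-total colouring. Moreover, in every $(k+1)$-total colouring of $H_k$, all $k$ half-edges receive the same colour.
   Context: Graphs may contain half-edges: a half-edge has exactly one end vertex. A $(k+1)$-total colouring of such a graph assigns to each vertex, each edge and each half-edge one of $k+1$ colours so that no two adjacent vertices, no two edges/half-edges sharing an end vertex, and no vertex together with an edge or half-edge incident with it receive the same colour. The maximum degree of $H_k$ (counting half-edges) is $k$, and ''type 1'' means it has a total colouring with maximum degree $+1$ colours. *)

From mathcomp Require Import all_boot.
Set Implicit Arguments. Unset Strict Implicit. Unset Printing Implicit Defensive.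

(* A finite graph with half-edges: vertex type V, edge type E; each element e
   of E has a first end vertex (ends e).1 and a second end (ends e).2 which is
   [Some w] for an ordinary edge and [None] for a half-edge. *)

Definition incident (V E : finType) (ends : E -> V * option V) (v : V) (e : E) : Prop :=
  (ends e).1 = v \/ (ends e).2 = Some v.

Definition is_total_colouring (V E : finType) (ends : E -> V * option V) (n : nat)
    (cv : V -> 'I_n) (ce : E -> 'I_n) : Prop :=
  (forall (e : E) (u w : V), ends e = (u, Some w) -> cv u <> cv w) /\
  (forall (e f : E) (v : V), e <> f -> incident ends v e -> incident ends v f ->
       ce e <> ce f) /\
  (forall (e : E) (v : V), incident ends v e -> cv v <> ce e).

(* H_k: K_{k,k} with parts A = 'I_k and B = 'I_k (last vertex of B deleted);
   remaining B-vertices are 'I_k.-1.  Edges: a_i b_j (j : 'I_k.-1) and one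
   half-edge at each a_i (the former edge a_i b_{k-1}). *)
Definition Hk_V (k : nat) : finType := ('I_k + 'I_k.-1)%type.
Definition Hk_E (k : nat) : finType := (('I_k * 'I_k.-1) + 'I_k)%type.

Definition Hk_ends (k : nat) (e : Hk_E k) : Hk_V k * option (Hk_V k) :=
  match e with
  | inl (i, j) => (inl i, Some (inr j))
  | inr i => (inl i, None)
  end.

Definition Hk_half (k : nat) (i : 'I_k) : Hk_E k := inr i.

From mathcomp Require Import all_boot zify.
Set Implicit Arguments. Unset Strict Implicit. Unset Printing Implicit Defensive.

(* At a vertex of degree d, a (d+1)-total colouring uses every colour exactly
   once on the vertex and its incident edges.  Every a_i and every b_j of H_k
   has degree k, so for each colour c, counting over A and over B gives
   #a(c) + #half(c) + #edges(c) = k and #b(c) + #edges(c) = k - 1.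
   A colour used on B is absent from A, hence appears on at least #b(c) + 1
   half-edges.  Summing over the colours used on B, and comparing with the k
   half-edges and k - 1 vertices of B, forces a single colour on B, and this
   colour then appears on all k half-edges.  For existence, colour a_i with
   i - 1 and a_i b_j with i + j (mod k), and use the extra colour k on B and
   on the half-edges. *)

Lemma big_option (R : Type) (idx : R) (op : Monoid.com_law idx)
    (T : finType) (F : option T -> R) :
  \big[op/idx]_o F o = op (F None) (\big[op/idx]_t F (Some t)).
Proof.
rewrite (bigD1 None) //= (reindex_omap Some id) //=; last by case.
by congr (op _ _); apply: eq_bigl => t; rewrite eqxx.
Qed.

Lemma sum_eq_inj_card (T : finType) (n : nat) (f : T -> 'I_n) (c : 'I_n) :
  injective f -> #|T| = n -> \sum_t (f t == c) = 1.
Proof.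
move=> f_inj cardT.
have [g fK gK] : bijective f by apply: inj_card_bij; rewrite // card_ord cardT.
apply/eqP/sum_nat_eq1; exists (g c); split=> //; first by rewrite gK eqxx.
by move=> t neq_t _; apply/eqP; rewrite eqb0; apply: contra neq_t => /eqP <-; rewrite fK.
Qed.

Lemma sum_fibres_card (T : finType) (n : nat) (f : T -> 'I_n) :
  \sum_(c < n) \sum_t (f t == c) = #|T|.
Proof.
rewrite exchange_big -sum1_card; apply: eq_bigr => t _.
apply/eqP/sum_nat_eq1; exists (f t); split=> //; first by rewrite eqxx.
by move=> c neq_c _; rewrite eq_sym (negbTE neq_c).
Qed.

Lemma sum_bool_card (I : finType) (b : pred I) :
  #|I| <= \sum_i b i -> forall i, b i.
Proof.
move=> le_card.
have sum_b_negb : \sum_i b i + \sum_i ~~ b i = #|I|.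
  by rewrite -big_split -sum1_card; apply: eq_bigr => i _; rewrite /= addnC addn_negb.
have /eqP : \sum_i ~~ b i = 0 by move: le_card sum_b_negb; lia.
by rewrite sum_nat_eq0 => /forallP negb0 i; move: (negb0 i); case: (b i).
Qed.

Section LocalConditions.
Variables (V E : finType) (ends : E -> V * option V) (n : nat).
Variables (cv : V -> 'I_n) (ce : E -> 'I_n).

Definition proper_at (v : V) : Prop :=
  (forall e f : E, e <> f -> incident ends v e -> incident ends v f -> ce e <> ce f) /\
  (forall e : E, incident ends v e -> cv v <> ce e).

Lemma is_total_colouringE :
  is_total_colouring ends cv ce <->
  (forall (e : E) (u w : V), ends e = (u, Some w) -> cv u <> cv w) /\
  (forall v : V, proper_at v).
Proof.
rewrite /is_total_colouring /proper_at; split.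
  by case=> adj [edges vert]; split=> // v; split=> [e f|e]; [exact: edges | exact: vert].
case=> adj loc; split=> //; split=> [e f v|e v]; by case: (loc v) => ? ?; auto.
Qed.

Definition star_colour (v : V) (T : Type) (p : T -> E) (o : option T) : 'I_n :=
  if o is Some t then ce (p t) else cv v.

Lemma proper_atP (v : V) (T : Type) (p : T -> E) :
  injective p -> (forall e, incident ends v e <-> exists t, e = p t) ->
  proper_at v <-> injective (star_colour v p).
Proof.
move=> p_inj incP; split.
  case=> edges vert [t|] [t'|] //= eq_col.
  - congr Some; apply: p_inj; apply/eqP/negPn/negP => /eqP neq_p.
    by apply: (edges _ _ neq_p) eq_col; apply/incP; eexists.
  - by case: (vert (p t)) => //; apply/incP; eexists.
  - by case: (vert (p t')) => //; apply/incP; eexists.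
move=> star_inj; split=> [e f neq_ef /incP[t def_e] /incP[t' def_f] eq_col|e /incP[t ->] eq_col].
  apply: neq_ef; rewrite def_e def_f; congr (p _); apply: Some_inj; apply: star_inj => /=.
  by rewrite -def_e -def_f.
by have := star_inj None (Some t) eq_col.
Qed.

End LocalConditions.

Section HkStructure.
Variable k : nat.

Definition a_edge (i : 'I_k) (t : option 'I_k.-1) : Hk_E k :=
  if t is Some j then inl (i, j) else Hk_half i.

Definition b_edge (j : 'I_k.-1) (i : 'I_k) : Hk_E k := inl (i, j).

Lemma a_edge_inj (i : 'I_k) : injective (a_edge i).
Proof. by case=> [j|] [j'|] // [->]. Qed.

Lemma b_edge_inj (j : 'I_k.-1) : injective (b_edge j).
Proof. by move=> i i' [->]. Qed.

Lemma incident_Hk_a (i : 'I_k) (e : Hk_E k) :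
  incident (@Hk_ends k) (inl i) e <-> exists t, e = a_edge i t.
Proof.
rewrite /incident; case: e => [[i' j]|i'] /=; split.
- by case=> // -[->]; exists (Some j).
- by case=> -[j'|] //= [-> _]; left.
- by case=> // -[->]; exists None.
- by case=> -[j'|] //= [->]; left.
Qed.

Lemma incident_Hk_b (j : 'I_k.-1) (e : Hk_E k) :
  incident (@Hk_ends k) (inr j) e <-> exists i, e = b_edge j i.
Proof.
rewrite /incident; case: e => [[i j']|i] /=; split.
- by case=> // -[->]; exists i.
- by case=> i' [_ ->]; right.
- by case.
- by case.
Qed.

Lemma Hk_total_colouringP (n : nat) (cv : Hk_V k -> 'I_n) (ce : Hk_E k -> 'I_n) :
  is_total_colouring (@Hk_ends k) cv ce <->
  [/\ forall i j, cv (inl i) <> cv (inr j),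
      forall i, injective (star_colour cv ce (inl i) (@a_edge i))
    & forall j, injective (star_colour cv ce (inr j) (@b_edge j))].
Proof.
have locP i := proper_atP cv ce (@a_edge_inj i) (incident_Hk_a i).
have locP' j := proper_atP cv ce (@b_edge_inj j) (incident_Hk_b j).
rewrite is_total_colouringE; split.
  case=> adj loc; split=> [i j|i|j]; [exact: (adj (inl (i, j))) | exact/locP | exact/locP'].
case=> adj loc loc'; split=> [[[i j]|i] u w //= [<- <-]|]; first exact: adj.
by case=> [i|j]; [exact/locP | exact/locP'].
Qed.

End HkStructure.

Section HalfEdgesMonochromatic.
Variables (k : nat) (cv : Hk_V k -> 'I_k.+1) (ce : Hk_E k -> 'I_k.+1).
Hypotheses (k_gt0 : 0 < k) (col : is_total_colouring (@Hk_ends k) cv ce).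

Definition nA (c : 'I_k.+1) := \sum_i (cv (inl i) == c).
Definition nB (c : 'I_k.+1) := \sum_j (cv (inr j) == c).
Definition nHalf (c : 'I_k.+1) := \sum_i (ce (Hk_half i) == c).
Definition nEdge (c : 'I_k.+1) := \sum_i \sum_j (ce (inl (i, j)) == c).

Lemma star_count (T : finType) (f : option T -> 'I_k.+1) (c : 'I_k.+1) :
  injective f -> #|T| = k -> (f None == c) + \sum_t (f (Some t) == c) = 1.
Proof.
move=> f_inj cardT; rewrite -(big_option _ (fun o => nat_of_bool (f o == c))).
by apply: sum_eq_inj_card; rewrite // card_option cardT.
Qed.

Lemma count_A (c : 'I_k.+1) : nA c + (nHalf c + nEdge c) = k.
Proof.
have [_ starA _] := (Hk_total_colouringP cv ce).1 col.
rewrite /nA /nHalf /nEdge -!big_split -[k in RHS]card_ord -sum1_card /=.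
apply: eq_bigr => i _; rewrite -(big_option _ (fun t => nat_of_bool (ce (a_edge i t) == c))).
by apply: (star_count c (starA i)); rewrite card_option card_ord prednK.
Qed.

Lemma count_B (c : 'I_k.+1) : nB c + nEdge c = k.-1.
Proof.
have [_ _ starB] := (Hk_total_colouringP cv ce).1 col.
rewrite /nB /nEdge exchange_big -big_split -[k.-1 in RHS]card_ord -sum1_card /=.
by apply: eq_bigr => j _; apply: (star_count c (starB j)); rewrite card_ord.
Qed.

Lemma nA_eq0 (c : 'I_k.+1) : 0 < nB c -> nA c = 0.
Proof.
have [adj _ _] := (Hk_total_colouringP cv ce).1 col.
rewrite lt0n sum_nat_eq0 => /forallPn[j]; rewrite eqb0 negbK => /eqP cbj.
by apply: big1 => i _; apply/eqP; rewrite eqb0 -cbj; apply/eqP/adj.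
Qed.

Lemma nHalf_ge (c : 'I_k.+1) : nB c + (0 < nB c) <= nHalf c.
Proof.
have := count_A c; have := count_B c.
by case: (posnP (nB c)) => [-> //|/nA_eq0 ->]; lia.
Qed.

Lemma nB_support (c c' : 'I_k.+1) : 0 < nB c -> 0 < nB c' -> c = c'.
Proof.
move=> nBc nBc'; apply/eqP/negPn/negP => neq_cc'.
have : k.-1 + \sum_c (0 < nB c) <= k.
  rewrite -(card_ord k.-1) -(sum_fibres_card (fun j => cv (inr j))) -big_split /=.
  rewrite -[k in _ <= k]card_ord -(sum_fibres_card (fun i => ce (Hk_half i))).
  by apply: leq_sum => d _; apply: nHalf_ge.
rewrite (bigD1 c) //= (bigD1 c') 1?eq_sym //=; move: nBc nBc'; lia.
Qed.

Lemma half_edge_colour (j : 'I_k.-1) (i : 'I_k) : ce (Hk_half i) = cv (inr j).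
Proof.
set c := cv (inr j).
have nBc : 0 < nB c by rewrite /nB (bigD1 j) //= eqxx.
have nBc_full : nB c = k.-1.
  rewrite -(card_ord k.-1) -(sum_fibres_card (fun j => cv (inr j))) (bigD1 c) //=.
  rewrite [X in _ + X]big1 ?addn0 // => d neq_dc; apply/eqP; rewrite -leqn0 leqNgt.
  by apply: contra neq_dc => nBd; rewrite (nB_support nBd nBc).
apply/eqP; apply: (sum_bool_card (b := fun i => ce (Hk_half i) == c)).
by have := nHalf_ge c; rewrite card_ord /nHalf; move: nBc; rewrite nBc_full; lia.
Qed.

End HalfEdgesMonochromatic.

Section ExplicitColouring.
Variables (k : nat) (k_gt0 : 0 < k).

Definition low_colour (m : nat) : 'I_k.+1 := inord (m %% k).
Arguments low_colour : simpl never.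

Lemma low_colour_val (m : nat) : low_colour m = m %% k :> nat.
Proof. by rewrite inordK // ltnS ltnW // ltn_pmod. Qed.

Lemma low_colour_neq_max (m : nat) : low_colour m <> ord_max.
Proof.
move/(congr1 (@nat_of_ord _)); rewrite low_colour_val /= => eq_mod.
by have := ltn_pmod m k_gt0; rewrite eq_mod ltnn.
Qed.

Lemma low_colour_addl_inj (i x y : nat) :
  x < k -> y < k -> low_colour (i + x) = low_colour (i + y) -> x = y.
Proof.
move=> lt_xk lt_yk /(congr1 (@nat_of_ord _)); rewrite !low_colour_val => /eqP.
by rewrite eqn_modDl !modn_small // => /eqP.
Qed.

Definition Hk_cv0 (v : Hk_V k) : 'I_k.+1 :=
  if v is inl i then low_colour (i + k.-1) else ord_max.

Definition Hk_ce0 (e : Hk_E k) : 'I_k.+1 :=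
  if e is inl (i, j) then low_colour (i + j) else ord_max.

Lemma Hk_explicit_total_colouring : is_total_colouring (@Hk_ends k) Hk_cv0 Hk_ce0.
Proof.
have lt_k (j : 'I_k.-1) : j < k by apply: leq_trans (ltn_ord j) (leq_pred k).
have lt_pred (j : 'I_k.-1) : k.-1 <> j by move: (ltn_ord j); lia.
have pred_lt_k : k.-1 < k by rewrite prednK.
have low_max := low_colour_neq_max.
have max_low (m : nat) : ord_max <> low_colour m := nesym (low_max m).
apply/Hk_total_colouringP; split=> [i j|i|j]; first exact: low_max.
  case=> [[j|]|] [[j'|]|] //= eq_col; try by [case: (low_max _ eq_col) | case: (max_low _ eq_col)].
  - by do 2!congr Some; apply: ord_inj; apply: low_colour_addl_inj eq_col.
  - by case: (lt_pred j); apply: esym; exact: low_colour_addl_inj eq_col.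
  - by case: (lt_pred j'); exact: low_colour_addl_inj eq_col.
case=> [i|] [i'|] //= eq_col; try by [case: (low_max _ eq_col) | case: (max_low _ eq_col)].
by congr Some; apply: ord_inj; apply: (@low_colour_addl_inj j); rewrite // ![j + _]addnC.
Qed.

End ExplicitColouring.

Theorem lemma2 (k : nat) (hk : 0 < k) :
  (exists (cv : Hk_V k -> 'I_k.+1) (ce : Hk_E k -> 'I_k.+1),
      is_total_colouring (@Hk_ends k) cv ce) /\
  (forall (cv : Hk_V k -> 'I_k.+1) (ce : Hk_E k -> 'I_k.+1),
      is_total_colouring (@Hk_ends k) cv ce ->
      forall i j : 'I_k, ce (Hk_half i) = ce (Hk_half j)).
Proof.
split; first by exists (@Hk_cv0 k), (@Hk_ce0 k); apply: Hk_explicit_total_colouring.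
move=> cv ce col i j; case: (posnP k.-1) => [k_eq1 | pred_gt0].
  by congr (ce (Hk_half _)); apply: ord_inj; move: (ltn_ord i) (ltn_ord j); lia.
by rewrite !(half_edge_colour hk col (Ordinal pred_gt0)).
Qed.
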